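(* Let $\mathcal A,\mathcal B\subset 2^{[n]}$ be cross-IU families (for all $A\in\mathcal A$, $B\in\mathcal B$: $A\cap B\neq\emptyset$ and $A\cup B\neq[n]$) with $|\mathcal A|\ge|\mathcal B|$. Then $$|\mathcal A|+3|\mathcal B|\le 2^n.$$
   Context: $[n]=\{1,\dots,n\}$ and $2^{[n]}$ is its power set. *)

From mathcomp Require Import all_boot.
Set Implicit Arguments. Unset Strict Implicit. Unset Printing Implicit Defensive.

(* Ground set [n] = {1,...,n} is modelled by 'I_n = {0,...,n-1}. *)
Definition cross_IU (n : nat) (FA FB : {set {set 'I_n}}) : Prop :=
  forall A B, A \in FA -> B \in FB -> A :&: B != set0 /\ A :|: B != [set: 'I_n].

From mathcomp Require Import all_boot zify.

(* By the Harris-Kleitman inequality, a family F of subsets of [n] satisfies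
   |F| 2^n <= |up F| |down F|, since F lies in the intersection of the up-set
   and the down-set it generates.  Cross-intersection of FA, FB means that no
   complement of a set of up FA lies in up FB, whence |up FA| + |up FB| <= 2^n;
   dually, the cross-union condition gives |down FA| + |down FB| <= 2^n.  These
   four bounds together with |FB| <= |FA| force |FA| + 3 |FB| <= 2^n. *)

Set Implicit Arguments.
Unset Strict Implicit.
Unset Printing Implicit Defensive.

Lemma chebyshev_mul_sum a0 a1 p u0 u1 d0 d1 :
  a0 * p <= u0 * d0 -> a1 * p <= u1 * d1 -> u0 <= u1 -> d1 <= d0 ->
  (a0 + a1) * (2 * p) <= (u0 + u1) * (d0 + d1).
Proof.
move=> le0 le1 u01 d10.
have : 2 * (u0 * d0 + u1 * d1) <= (u0 + u1) * (d0 + d1) by nia.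
lia.
Qed.

Lemma add_3mul_leq_of_mul_bounds a b uA uB dA dB N :
  a * N <= uA * dA -> b * N <= uB * dB -> uA + uB <= N -> dA + dB <= N ->
  b <= a -> 0 < N -> a + 3 * b <= N.
Proof.
move=> haN hbN hu hd hba N_gt0.
rewrite -(leq_pmul2r N_gt0).
have [hs | hs] := leqP (uA + dA) N.
  have amgm : 4 * (uA * dA) <= (uA + dA) * (uA + dA).
    by rewrite mulnn nat_AGM2.
  have : b * N <= a * N by rewrite leq_mul2r hba orbT.
  have : (uA + dA) * (uA + dA) <= N * N by apply: leq_mul.
  lia.
(* Writing uA = q + s, dA = p + s, N = p + q + s, what remains is
   (p - q)^2 + s (p + q) >= 0. *)
have [p [q [s [uA_def dA_def N_def]]]] :
    exists p q s, [/\ uA = q + s, dA = p + s & N = p + q + s].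
  by exists (N - uA), (N - dA), (uA + dA - N); split; lia.
subst uA dA N.
have : uB * dB <= p * q by apply: leq_mul; lia.
have : 4 * (p * q) <= (p + q) * (p + q) by rewrite mulnn nat_AGM2.
nia.
Qed.

Section HarrisKleitman.

Variable T : finType.
Implicit Types (x : T) (S X Y A B : {set T}) (F G U D FA FB : {set {set T}}).

Definition upclosed_in S U :=
  forall X Y, X \in U -> X \subset Y -> Y \subset S -> Y \in U.

Definition downclosed D := forall X Y, X \in D -> Y \subset X -> Y \in D.

Definition deletion x F := [set X : {set T} | (x \notin X) && (X \in F)].

Definition link x F := [set X : {set T} | (x \notin X) && (x |: X \in F)].

Lemma card_deletion_link x F : #|F| = #|deletion x F| + #|link x F|.
Proof.
have -> : #|link x F| = #|[set X in F | x \in X]|.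
  rewrite -(card_in_imset (f := setU [set x])); last first.
    by move=> X1 X2; rewrite !inE => /andP[x1 _] /andP[x2 _] eq12;
       rewrite -(setU1K x1) -(setU1K x2) eq12.
  apply: eq_card => Y; rewrite inE; apply/imsetP/andP => [[X]|[YF xY]].
    by rewrite inE => /andP[_ xXF] ->; rewrite setU11.
  by exists (Y :\ x); rewrite ?setD1K // inE setD11 setD1K.
rewrite -(cardsID [set X : {set T} | x \in X] F) addnC.
by congr (_ + _); apply: eq_card => X; rewrite !inE.
Qed.

Lemma deletionI x U D : deletion x (U :&: D) = deletion x U :&: deletion x D.
Proof. by apply/setP => X; rewrite !inE andbACA andbb. Qed.

Lemma linkI x U D : link x (U :&: D) = link x U :&: link x D.
Proof. by apply/setP => X; rewrite !inE andbACA andbb. Qed.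

Lemma deletion_sub S x F :
  F \subset powerset S -> deletion x F \subset powerset (S :\ x).
Proof.
move=> /subsetP FS; apply/subsetP => X; rewrite !inE subsetD1 => /andP[-> XF].
by have := FS X XF; rewrite powersetE => ->.
Qed.

Lemma link_sub S x F :
  F \subset powerset S -> link x F \subset powerset (S :\ x).
Proof.
move=> /subsetP FS; apply/subsetP => X; rewrite !inE subsetD1 => /andP[-> xXF].
by have := FS _ xXF; rewrite powersetE subUset => /andP[_ ->].
Qed.

Lemma setU1_subset S x X : x \in S -> X \subset S -> x |: X \subset S.
Proof. by move=> xS XS; rewrite subUset sub1set xS. Qed.

Lemma deletion_upclosed S x U :
  upclosed_in S U -> upclosed_in (S :\ x) (deletion x U).
Proof.
move=> Uup X Y; rewrite !inE subsetD1 => /andP[_ XU] XY /andP[YS xY].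
by rewrite xY (Uup X).
Qed.

Lemma link_upclosed S x U :
  x \in S -> upclosed_in S U -> upclosed_in (S :\ x) (link x U).
Proof.
move=> xS Uup X Y; rewrite !inE subsetD1 => /andP[_ xXU] XY /andP[YS xY].
by rewrite xY (Uup (x |: X)) ?setUS ?setU1_subset.
Qed.

Lemma deletion_downclosed x D : downclosed D -> downclosed (deletion x D).
Proof.
move=> Ddown X Y; rewrite !inE => /andP[xX XD] YX.
by rewrite (Ddown X) // andbT; apply: contra xX => /(subsetP YX).
Qed.

Lemma link_downclosed x D : downclosed D -> downclosed (link x D).
Proof.
move=> Ddown X Y; rewrite !inE => /andP[xX xXD] YX.
by rewrite (Ddown (x |: X)) ?setUS // andbT; apply: contra xX => /(subsetP YX).
Qed.

Lemma deletion_sub_link S x U :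
  x \in S -> U \subset powerset S -> upclosed_in S U ->
  deletion x U \subset link x U.
Proof.
move=> xS /subsetP US Uup; apply/subsetP => X; rewrite !inE => /andP[-> XU] /=.
have := US X XU; rewrite powersetE => XS.
by rewrite (Uup X) ?subsetUr ?setU1_subset.
Qed.

Lemma link_sub_deletion x D : downclosed D -> link x D \subset deletion x D.
Proof.
move=> Ddown; apply/subsetP => X; rewrite !inE => /andP[-> xXD] /=.
exact: Ddown xXD (subsetUr _ _).
Qed.

Theorem harris_kleitman S U D :
  U \subset powerset S -> D \subset powerset S ->
  upclosed_in S U -> downclosed D ->
  #|U :&: D| * 2 ^ #|S| <= #|U| * #|D|.
Proof.
move cardS : #|S| => k; elim: k S cardS U D => [|k IHk] S cardS U D US DS Uup Ddown.
  rewrite muln1; have [D0 | D_gt0] := posnP #|D|.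
    by move: D0 => /eqP; rewrite cards_eq0 => /eqP ->; rewrite setI0 cards0.
  exact: leq_trans (subset_leq_card (subsetIl U D)) (leq_pmulr _ D_gt0).
have /set0Pn [x xS] : S != set0 by rewrite -card_gt0 cardS.
have cardSx : #|S :\ x| = k by move: cardS; rewrite (cardsD1 x S) xS => -[].
have IH0 := IHk _ cardSx _ _ (deletion_sub x US) (deletion_sub x DS)
  (deletion_upclosed (x := x) Uup) (deletion_downclosed (x := x) Ddown).
have IH1 := IHk _ cardSx _ _ (link_sub x US) (link_sub x DS)
  (link_upclosed xS Uup) (link_downclosed (x := x) Ddown).
rewrite (card_deletion_link x U) (card_deletion_link x D).
rewrite (card_deletion_link x (U :&: D)) deletionI linkI expnS.
apply: chebyshev_mul_sum IH0 IH1 _ _.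
- exact/subset_leq_card/(deletion_sub_link xS US Uup).
- exact/subset_leq_card/link_sub_deletion.
Qed.

Definition upset F := [set Y : {set T} | [exists X in F, X \subset Y]].

Definition downset F := [set Y : {set T} | [exists X in F, Y \subset X]].

Lemma upset_upclosed F : upclosed_in setT (upset F).
Proof.
move=> X Y; rewrite !inE => /exists_inP[Z ZF ZX] XY _.
by apply/exists_inP; exists Z => //; apply: subset_trans XY.
Qed.

Lemma downset_downclosed F : downclosed (downset F).
Proof.
move=> X Y; rewrite !inE => /exists_inP[Z ZF XZ] YX.
by apply/exists_inP; exists Z => //; apply: subset_trans XZ.
Qed.

Lemma sub_powersetT F : F \subset powerset setT.
Proof. by apply/subsetP => X _; rewrite powersetE subsetT. Qed.

Lemma card_le_upset_downset F :
  #|F| * 2 ^ #|T| <= #|upset F| * #|downset F|.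
Proof.
apply: leq_trans (harris_kleitman (sub_powersetT _) (sub_powersetT _)
  (@upset_upclosed F) (@downset_downclosed F)); rewrite cardsT leq_mul2r.
apply/orP; right; apply/subset_leq_card/subsetP => X XF.
by rewrite !inE; apply/andP; split; apply/exists_inP; exists X.
Qed.

Lemma card_add_le_compl_free F G :
  (forall Y, Y \in F -> ~: Y \notin G) -> #|F| + #|G| <= 2 ^ #|T|.
Proof.
move=> FG; rewrite -(card_imset _ (@setC_inj T)) -cardsUI.
have -> : [set ~: Y | Y in F] :&: G = set0.
  by apply/setP => Z; rewrite !inE; apply/andP => -[/imsetP[Y /FG/negP YG ->]].
by rewrite cards0 addn0 -cardsT -card_powerset subset_leq_card ?sub_powersetT.
Qed.

Lemma upset_compl_free FA FB :
  (forall A B, A \in FA -> B \in FB -> A :&: B != set0) ->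
  forall Y, Y \in upset FA -> ~: Y \notin upset FB.
Proof.
move=> cross Y; rewrite !inE => /exists_inP[A AF AY].
apply/exists_inP => -[B BF BY]; apply/negP: (cross A B AF BF).
rewrite negbK -subset0; apply/subsetP => z; rewrite inE => /andP[zA zB].
by have := subsetP BY z zB; rewrite inE (subsetP AY z zA).
Qed.

Lemma downset_compl_free FA FB :
  (forall A B, A \in FA -> B \in FB -> A :|: B != setT) ->
  forall Y, Y \in downset FA -> ~: Y \notin downset FB.
Proof.
move=> cross Y; rewrite !inE => /exists_inP[A AF YA].
apply/exists_inP => -[B BF YB]; apply/negP: (cross A B AF BF).
rewrite negbK -subTset; apply/subsetP => z _; rewrite inE.
have [/(subsetP YA) -> // | zY] := boolP (z \in Y).
by rewrite (subsetP YB) ?orbT // inE zY.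
Qed.

End HarrisKleitman.

Theorem theorem3p3 (n : nat) (FA FB : {set {set 'I_n}}) :
  cross_IU FA FB -> #|FB| <= #|FA| -> #|FA| + 3 * #|FB| <= 2 ^ n.
Proof.
move=> cross FBA; rewrite -[X in 2 ^ X]card_ord.
apply: (add_3mul_leq_of_mul_bounds (card_le_upset_downset FA)
  (card_le_upset_downset FB) _ _ FBA).
- apply/card_add_le_compl_free/upset_compl_free => A B AF BF.
  by have [] := cross A B AF BF.
- apply/card_add_le_compl_free/downset_compl_free => A B AF BF.
  by have [] := cross A B AF BF.
- by rewrite expn_gt0.
Qed.
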